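(* Let $X=\mathbb{CP}^2\#n\overline{\mathbb{CP}}^2$, $k\ge1$, and let $[\omega]\in\mathcal{P}^{c_1>0}$ be a $c_1$-nef symplectic class on $X$. For small $\varepsilon>0$ let $\omega_\varepsilon$ be the symplectic form on $X\#\overline{\mathbb{CP}}^2$ obtained by a blowup of size $\varepsilon$, i.e. with class $[\omega]-\varepsilon PD(E_{n+1})$. Then $\lim_{\varepsilon\to0}f_k(X\#\overline{\mathbb{CP}}^2,\omega_\varepsilon)=f_k(X,\omega)$.
   Context: $K_0=-3H+E_1+\cdots+E_n$ (and $-3H+E_1+\cdots+E_{n+1}$ on the blowup), $\mathrm{ind}(A):=A^2-K_0\cdot A$. For a rational manifold $Y=\mathbb{CP}^2\#m\overline{\mathbb{CP}}^2$ with symplectic form $\omega$ of standard canonical class, $f_k(Y,\omega)=\inf\{\omega(A):A\in H_2(Y;\mathbb{Z})\ J\text{-nef},\ \mathrm{ind}(A)\ge2k\}$ for any $\omega$-tame $J$ ($A$ is $J$-nef if it pairs nonnegatively with all classes of $J$-holomorphic subvarieties); it depends only on $[\omega]$ and equals $\inf\{\omega(A):\mathrm{ind}(A)\ge2k,\ A\cdot H>0\}$. With $H^2\cong\mathbb{R}^{n+1}$ via $(x_0,\dots,x_n)\leftrightarrow x_0PD(H)-\sum x_iPD(E_i)$, the reduced cone $\mathcal{P}$ is: $0<x_1<x_0$ ($n=1$); $0<x_2\le x_1$, $x_1+x_2<x_0$ ($n=2$); $0<x_n\le\cdots\le x_1$, $x_1+x_2+x_3\le x_0$, $\sum x_i^2<x_0^2$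 ($n\ge3$); $\mathcal{P}^{c_1>0}=\{[\omega]\in\mathcal{P}:\omega(3H-\sum E_i)>0\}$. *)

From HB Require Import structures.
From mathcomp Require Import all_boot all_order all_algebra.
From mathcomp Require Import all_classical all_reals all_analysis.
Set Implicit Arguments. Unset Strict Implicit. Unset Printing Implicit Defensive.
Import Order.TTheory GRing.Theory Num.Theory.
Local Open Scope classical_set_scope.
Local Open Scope ring_scope.

(* Rational manifold Y = CP^2 # m (-CP^2), H_2(Y;Z) with basis H, E_1..E_m.
   A class A = d H - sum_i e_i E_i is encoded by (d, e) with e : nat -> int,
   only the entries e 1, ..., e m being relevant.
   A cohomology class x0 PD(H) - sum_i x_i PD(E_i) is encoded by (x0, x)
   with x : nat -> R, only x 1, ..., x m being relevant. *)

(* ind(A) = A^2 - K_0.A, K_0 = -3H + E_1 + ... + E_m: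
   A^2 = d^2 - sum e_i^2, K_0.A = -3d + sum e_i. *)
Definition ind (m : nat) (d : int) (e : nat -> int) : int :=
  d ^+ 2 - (\sum_(1 <= i < m.+1) (e i) ^+ 2) + 3 * d - \sum_(1 <= i < m.+1) e i.

Definition pairing {R : realType} (m : nat) (x0 : R) (x : nat -> R)
  (d : int) (e : nat -> int) : R :=
  x0 * d%:~R - \sum_(1 <= i < m.+1) x i * (e i)%:~R.

(* f_k(Y, omega) = inf { omega(A) : ind(A) >= 2k, A.H > 0 } (A.H = d),
   taken in the extended reals. *)
Definition fk {R : realType} (m k : nat) (x0 : R) (x : nat -> R) : \bar R :=
  ereal_inf [set (pairing m x0 x A.1 A.2)%:E |
              A in [set A : int * (nat -> int) |
                    ((2 * k)%:Z <= ind m A.1 A.2) /\ (0 < A.1)]].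

Definition reduced_cone {R : realType} (n : nat) (x0 : R) (x : nat -> R) : Prop :=
  match n with
  | 0 => False
  | 1 => 0 < x 1%N /\ x 1%N < x0
  | 2 => (0 < x 2%N /\ x 2%N <= x 1%N) /\ x 1%N + x 2%N < x0
  | _ => (0 < x n /\ (forall i : nat, (1 <= i < n)%N -> x i.+1 <= x i))
         /\ x 1%N + x 2%N + x 3%N <= x0
         /\ \sum_(1 <= i < n.+1) (x i) ^+ 2 < x0 ^+ 2
  end.

(* P^{c_1>0}: reduced and omega(3H - sum E_i) = 3 x0 - sum x_i > 0 *)
Definition c1_pos_reduced {R : realType} (n : nat) (x0 : R) (x : nat -> R) : Prop :=
  reduced_cone n x0 x /\ 0 < 3 * x0 - \sum_(1 <= i < n.+1) x i.

(* class of the blowup of size eps: [omega] - eps PD(E_{n+1}) *)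
Definition blowup {R : realType} (n : nat) (x : nat -> R) (eps : R) : nat -> R :=
  fun i => if i == n.+1 then eps else x i.

From HB Require Import structures.
From mathcomp Require Import all_boot all_order all_algebra.
From mathcomp Require Import all_classical all_reals all_analysis.
From mathcomp Require Import ring lra zify.
Set Implicit Arguments. Unset Strict Implicit. Unset Printing Implicit Defensive.
Import Order.TTheory GRing.Theory Num.Theory numFieldNormedType.Exports.
Local Open Scope classical_set_scope.
Local Open Scope ring_scope.

(* If a class A = d H - sum_i e_i E_i of X has ind(A) >= 2k, so does the same
   class on the blowup (with e_(n+1) = 0), and its [omega_eps]-area is
   [omega(A)]; hence f_k(X # CP2bar, omega_eps) <= f_k(X, omega).
   Conversely, a class of the blowup with ind >= 2k restricts to such a class
   of X and has e_(n+1) <= d, so its area is at least [omega(A|X) - eps d].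
   On the reduced cone sum_i x_i^2 < x_0^2, so by Cauchy-Schwarz
   [omega(A|X) >= c d - K] with c > 0; interpolating between this and
   [omega(A|X) >= f_k(X, omega)] gives
   f_k(X # CP2bar, omega_eps) >= f_k(X, omega) - eps (f_k(X, omega) + K) / c. *)

Lemma sqrrD_self_ge0 (t : int) : 0 <= t ^+ 2 + t.
Proof. rewrite expr2; nia. Qed.

Lemma indE m d e :
  ind m d e = d ^+ 2 + 3 * d - \sum_(1 <= i < m.+1) (e i ^+ 2 + e i).
Proof. rewrite /ind big_split /=; ring. Qed.

Lemma ind_recr m d e : ind m.+1 d e = ind m d e - (e m.+1 ^+ 2 + e m.+1).
Proof. rewrite !indE big_nat_recr //=; ring. Qed.

Lemma ind_le_recr m d e : ind m.+1 d e <= ind m d e.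
Proof. by rewrite ind_recr gerBl sqrrD_self_ge0. Qed.

Lemma ind_le m d e : ind m d e <= d ^+ 2 + 3 * d.
Proof. by rewrite indE gerBl sumr_ge0 // => i _; exact: sqrrD_self_ge0. Qed.

Lemma ind_ge0_last_le m d e : 0 <= d -> 0 <= ind m.+1 d e -> e m.+1 <= d.
Proof.
move=> d0; rewrite ind_recr subr_ge0 => /le_trans/(_ (ind_le m d e)).
move: (e m.+1) => t; rewrite !expr2; nia.
Qed.

Lemma eq_ind m d e e' :
  (forall i, (1 <= i <= m)%N -> e i = e' i) -> ind m d e = ind m d e'.
Proof.
move=> ee'; rewrite !indE; congr (_ - _).
by apply: eq_big_nat => i /andP[i1 im]; rewrite ee' // i1 -ltnS.
Qed.

Lemma pairing_recr (R : realType) m (x0 : R) x d e :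
  pairing m.+1 x0 x d e = pairing m x0 x d e - x m.+1 * (e m.+1)%:~R.
Proof. rewrite /pairing big_nat_recr //=; ring. Qed.

Lemma eq_pairing (R : realType) m (x0 : R) x x' d e e' :
  (forall i, (1 <= i <= m)%N -> x i = x' i /\ e i = e' i) ->
  pairing m x0 x d e = pairing m x0 x' d e'.
Proof.
move=> xe; rewrite /pairing; congr (_ - _); apply: eq_big_nat => i hi.
by have /xe[-> ->] : (1 <= i <= m)%N by lia.
Qed.

Lemma pairing_blowup (R : realType) n (x0 : R) x eps d e :
  pairing n.+1 x0 (blowup n x eps) d e = pairing n x0 x d e - eps * (e n.+1)%:~R.
Proof.
rewrite pairing_recr /blowup eqxx; congr (_ - _).
by apply: eq_pairing => i hi; rewrite ifN //; lia.
Qed.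

Lemma reduced_cone_gt0 (R : realType) n (x0 : R) x :
  reduced_cone n x0 x -> forall i, (1 <= i <= n)%N -> 0 < x i.
Proof.
case: n => [//|[|[|n]]] /=.
- by move=> [x1 _] i /andP[? ?]; have -> : i = 1%N by lia.
- move=> [[x2 x21] _] i /andP[? ?].
  by have [->|->] : (i = 1 \/ i = 2)%N; [lia | lra | ].
move=> [[xn xdec] _] i hi; apply: lt_le_trans xn _.
pose D := [pred j | 1 <= j <= n.+3]%N.
have Dconvex : {in D &, forall i j k, (i < k < j)%N -> k \in D}.
  by move=> a b; rewrite !inE => ha hb c hc; rewrite inE; lia.
apply: (Order.NatMonotonyTheory.nonincn_inP Dconvex); rewrite ?inE /=.
- by move=> j; rewrite !inE => hj hj1; apply: xdec; lia.
- by [].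
- exact: hi.
- by case/andP: hi.
Qed.

Lemma reduced_cone_sum_sqr_lt (R : realType) n (x0 : R) x :
  reduced_cone n x0 x -> 0 < x0 /\ \sum_(1 <= i < n.+1) x i ^+ 2 < x0 ^+ 2.
Proof.
move=> hP; have pos := reduced_cone_gt0 hP.
move: hP; case: n pos => [//|[|[|n]]] /= pos.
- by move=> [x1 x10]; rewrite big_nat1; split; nra.
- move=> [[_ x21] x12]; rewrite big_nat_recr // big_nat1 /=.
  have := pos 1%N isT; have := pos 2%N isT; split; nra.
move=> [_ [x123 hS]]; split => //.
by have := pos 1%N isT; have := pos 2%N isT; have := pos 3%N isT; lra.
Qed.

Lemma sum_mul_AMGM (R : realDomainType) (I : Type) (r : seq I) (u v : I -> R) (s t : R) :
  2 * (s * t) * \sum_(i <- r) u i * v i <=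
    s ^+ 2 * \sum_(i <- r) u i ^+ 2 + t ^+ 2 * \sum_(i <- r) v i ^+ 2.
Proof.
rewrite !mulr_sumr -big_split /=; apply: ler_sum => i _.
by have := sqr_ge0 (s * u i - t * v i); rewrite sqrrB !exprMn; lra.
Qed.

(* Shifting by 1/2 turns the constraint into a bound on the squares
   sum_i (y_i + 1/2)^2 <= d^2 + 3 d + n/4, to which AM-GM applies. *)
Lemma sum_mul_le_affine (R : realFieldType) n (x y : nat -> R) (a d : R) :
  0 < a -> \sum_(1 <= i < n.+1) x i ^+ 2 <= a ^+ 2 -> 1 <= d ->
  \sum_(1 <= i < n.+1) (y i ^+ 2 + y i) <= d ^+ 2 + 3 * d ->
  \sum_(1 <= i < n.+1) x i * y i <=
    a * d + (3 * a / 2 + a * n%:R / 8) - (\sum_(1 <= i < n.+1) x i) / 2.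
Proof.
move=> a0 hx d1 hy.
set X := \sum_(1 <= i < n.+1) (y i + 1 / 2) * x i.
have sum_xy : \sum_(1 <= i < n.+1) x i * y i = X - (\sum_(1 <= i < n.+1) x i) / 2.
  have -> : X = \sum_(1 <= i < n.+1) (x i * y i + x i / 2).
    by apply: eq_bigr => i _; ring.
  by rewrite big_split /= -mulr_suml addrK.
have sum_sqr : \sum_(1 <= i < n.+1) (y i + 1 / 2) ^+ 2 =
    \sum_(1 <= i < n.+1) (y i ^+ 2 + y i) + n%:R / 4.
  rewrite (eq_bigr (fun i => (y i ^+ 2 + y i) + 1 / 4)) => [|i _]; last by field.
  rewrite big_split /= sumr_const_nat subn1 /=; congr (_ + _).
  by rewrite -[LHS]mulr_natl; field.
have := sum_mul_AMGM (index_iota 1 n.+1) (fun i => y i + 1 / 2) x a d.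
rewrite -/X sum_sqr => amgm.
have ad0 : 0 < 2 * (a * d) by nra.
rewrite sum_xy lerD2r -(ler_pM2l ad0); apply: (le_trans amgm).
have h1 := ler_wpM2l (sqr_ge0 a) hy.
have h2 := ler_wpM2l (sqr_ge0 d) hx.
have h3 : a ^+ 2 * n%:R <= a ^+ 2 * n%:R * d.
  by rewrite ler_peMr // mulr_ge0 ?sqr_ge0.
rewrite !mulrDr; lra.
Qed.

Lemma pairing_ge_affine (R : realType) n (x0 : R) x :
  reduced_cone n x0 x -> exists c K : R, 0 < c /\
    forall d e, 0 < d -> 0 <= ind n d e -> c * d%:~R - K <= pairing n x0 x d e.
Proof.
move=> /reduced_cone_sum_sqr_lt [x00 hS].
set S := \sum_(1 <= i < n.+1) x i ^+ 2 in hS.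
have S0 : 0 <= S by apply: sumr_ge0 => i _; exact: sqr_ge0.
pose a := Num.sqrt ((x0 ^+ 2 + S) / 2).
have a2 : a ^+ 2 = (x0 ^+ 2 + S) / 2 by rewrite sqr_sqrtr // divr_ge0 ?addr_ge0 ?sqr_ge0.
have a0 : 0 < a by rewrite sqrtr_gt0; nra.
have ax0 : a < x0 by nra.
exists (x0 - a), (3 * a / 2 + a * n%:R / 8 - (\sum_(1 <= i < n.+1) x i) / 2).
split=> [|d e d0 hind]; first lra.
have hy : \sum_(1 <= i < n.+1) (((e i)%:~R : R) ^+ 2 + (e i)%:~R) <=
    (d%:~R) ^+ 2 + 3 * d%:~R.
  move: hind; rewrite indE subr_ge0 -(ler_int R) rmorph_sum /=.
  by rewrite rmorphD rmorphXn rmorphM /=; under eq_bigr do rewrite rmorphD rmorphXn.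
have d1 : 1 <= (d%:~R : R) by rewrite ler1z.
have hSa : S <= a ^+ 2 by lra.
have := sum_mul_le_affine a0 hSa d1 hy.
rewrite /pairing; lra.
Qed.

Lemma fk_le_pairing (R : realType) m k (x0 : R) x d e :
  (2 * k)%:Z <= ind m d e -> 0 < d -> (fk m k x0 x <= (pairing m x0 x d e)%:E)%E.
Proof. by move=> hi hd; apply: ereal_inf_lbound; exists (d, e). Qed.

Lemma fk_ge (R : realType) m k (x0 : R) x (l : \bar R) :
  (forall d e, (2 * k)%:Z <= ind m d e -> 0 < d -> (l <= (pairing m x0 x d e)%:E)%E) ->
  (l <= fk m k x0 x)%E.
Proof. by move=> hl; apply: le_ereal_inf_tmp => _ [[d e] /= [hi hd] <-]; exact: hl. Qed.

Lemma fk_fin_num (R : realType) n k (x0 : R) x :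
  (1 <= k)%N -> reduced_cone n x0 x -> fk n k x0 x \is a fin_num.
Proof.
move=> hk /pairing_ge_affine [c [K [c0 hcK]]].
have lb : ((c - K)%:E <= fk n k x0 x)%E.
  apply: fk_ge => d e hi hd; rewrite lee_fin.
  have hind : 0 <= ind n d e by lia.
  have := hcK d e hd hind.
  have : 1 <= (d%:~R : R) by rewrite ler1z.
  nra.
have ub : (fk n k x0 x <= (pairing n x0 x k%:Z (fun=> 0))%:E)%E.
  apply: fk_le_pairing; last by lia.
  rewrite indE big1 => [|i _]; last by rewrite expr0n.
  rewrite subr0 expr2; nia.
by rewrite fin_numElt (lt_le_trans _ lb) ?ltNyr // (le_lt_trans ub) ?ltry.
Qed.

Definition lift_class n (e : nat -> int) : nat -> int :=
  fun i => if i == n.+1 then 0 else e i.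

Lemma ind_lift_class n d e : ind n.+1 d (lift_class n e) = ind n d e.
Proof.
rewrite ind_recr; have -> : lift_class n e n.+1 = 0 by rewrite /lift_class eqxx.
rewrite expr2 mul0r addr0.
by apply: eq_ind => i hi; rewrite /lift_class ifN //; lia.
Qed.

Lemma pairing_blowup_lift_class (R : realType) n (x0 : R) x eps d e :
  pairing n.+1 x0 (blowup n x eps) d (lift_class n e) = pairing n x0 x d e.
Proof.
rewrite pairing_blowup {2}/lift_class eqxx mulr0 subr0.
by apply: eq_pairing => i hi; rewrite /lift_class ifN //; lia.
Qed.

Lemma fk_blowup_le (R : realType) n k (x0 : R) x eps :
  (fk n.+1 k x0 (blowup n x eps) <= fk n k x0 x)%E.
Proof.
apply: fk_ge => d e hi hd; rewrite -(pairing_blowup_lift_class _ _ _ eps).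
by apply: fk_le_pairing; rewrite ?ind_lift_class.
Qed.

Lemma fk_blowup_ge (R : realType) n k (x0 : R) x (c K r eps : R) :
  0 < c ->
  (forall d e, 0 < d -> 0 <= ind n d e -> c * d%:~R - K <= pairing n x0 x d e) ->
  (r%:E <= fk n k x0 x)%E -> 0 <= eps <= c ->
  ((r - eps * ((r + K) / c))%:E <= fk n.+1 k x0 (blowup n x eps))%E.
Proof.
move=> c0 hcK hr /andP[eps0 epsc]; apply: fk_ge => d e hi hd.
have hi' : (2 * k)%:Z <= ind n d e := le_trans hi (ind_le_recr _ _ _).
set P := pairing n x0 x d e.
have P_ge_r : r <= P by rewrite -lee_fin (le_trans hr) // fk_le_pairing.
have P_ge_affine : c * d%:~R - K <= P by apply: hcK => //; lia.
have last_le : ((e n.+1)%:~R : R) <= d%:~R.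
  by rewrite ler_int; apply: ind_ge0_last_le; lia.
rewrite lee_fin pairing_blowup -/P.
set th := eps / c.
have th0 : 0 <= th by rewrite /th divr_ge0 // ltW.
have th1 : th <= 1 by rewrite /th ler_pdivrMr // mul1r.
have -> : eps * ((r + K) / c) = th * (r + K) by rewrite mulrA mulrAC.
have -> : eps = th * c by rewrite divfK ?gt_eqF.
(* Combine [P >= r] and [P >= c d - K] with weights [1 - eps/c] and [eps/c]. *)
have q1 : 0 <= (1 - th) * (P - r) by rewrite mulr_ge0 // subr_ge0.
have q2 : 0 <= th * (P - (c * d%:~R - K)) by rewrite mulr_ge0 // subr_ge0.
have q3 : 0 <= th * c * (d%:~R - (e n.+1)%:~R).
  by rewrite mulr_ge0 ?subr_ge0 // mulr_ge0 // ltW.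
lra.
Qed.

Lemma cvg_at_right0_affine (R : realFieldType) (r L : R) :
  r - eps * L @[eps --> 0^'+] --> r.
Proof.
apply: cvg_at_right_filter.
have lim0 : r - eps * L @[eps --> 0] --> r - 0 * L.
  by apply: cvgB; [exact: cvg_cst | apply: cvgM; [exact: cvg_id | exact: cvg_cst]].
by rewrite mul0r subr0 in lim0.
Qed.

Theorem corollary4p7 (R : realType) (n k : nat) (x0 : R) (x : nat -> R) :
  (1 <= n)%N -> (1 <= k)%N -> c1_pos_reduced n x0 x ->
  fk n.+1 k x0 (blowup n x eps) @[eps --> 0^'+] --> fk n k x0 x.
Proof.
move=> _ hk [hP _].
have [c [K [c0 hcK]]] := pairing_ge_affine hP.
have fkE := fineK (fk_fin_num hk hP).
set r := fine (fk n k x0 x) in fkE *.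
rewrite -fkE.
apply: (@squeeze_cvge _ _ _ _ (fun eps => (r - eps * ((r + K) / c))%:E) _ (cst r%:E)).
- near=> eps; apply/andP; split; last by rewrite fkE fk_blowup_le.
  apply: (fk_blowup_ge c0 hcK); first by rewrite fkE.
  apply/andP; split; apply: ltW.
    by near: eps; exact: nbhs_right_gt.
  by near: eps; exact: nbhs_right_lt.
- by apply: cvg_EFin; [exact: nearW | exact: cvg_at_right0_affine].
- exact: cvg_cst.
Unshelve. all: by end_near.
Qed.
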